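(* Let $m\mid n$, $s=n/m$, $\alpha$ a primitive element of $\mathbb{F}_{q^n}$, $l$ an integer with $1\le l<\frac{q^n-1}{q^m-1}$, $L$ the degree of the minimal polynomial of $\alpha^l$ over $\mathbb{F}_{q^m}$, and $\mathcal{F}=(\mathcal{F}_1,\dots,\mathcal{F}_r)$, $r\ge2$, the flag of type $(ms_1,\dots,ms_r)$ with $1\le s_1<\dots<s_r\le L$, $s_r<s$, and $\mathcal{F}_i=\bigoplus_{j=0}^{s_i-1}\mathbb{F}_{q^m}\alpha^{lj}$. Then: (1) $d_f(\mathrm{Orb}(\mathcal{F}))=2m$ if and only if the type of $\mathcal{F}$ is $(ms_1,mL)$ (so $r=2$, $s_2=L$) for some $1\le s_1<L<s$. Moreover, if in this case $s_1=1$, then $\mathcal{F}=(\mathbb{F}_{q^m},\mathbb{F}_{q^{mL}})$ is the Galois flag of type $(m,mL)$. (2) $\mathrm{Orb}(\mathcal{F})$ is an optimum distance flag code if and only if $L=s$ and the type of $\mathcal{F}$ is $(m,m(L-1))$. In this case $\mathrm{Orb}(\mathcal{F})$ is a generalized Galois flag code with the largest possible size $\frac{q^n-1}{q^m-1}$.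
   Context: $q$ prime power; subspaces are $\mathbb{F}_q$-subspaces of $\mathbb{F}_{q^n}$; a flag is a chain $\{0\}\subsetneq\mathcal{F}_1\subsetneq\cdots\subsetneq\mathcal{F}_r\subsetneq\mathbb{F}_{q^n}$ with type its vector of dimensions. $d_S(\mathcal{U},\mathcal{V})=\dim(\mathcal{U}+\mathcal{V})-\dim(\mathcal{U}\cap\mathcal{V})$, $d_f(\mathcal{F},\mathcal{F}')=\sum_i d_S(\mathcal{F}_i,\mathcal{F}'_i)$, $\mathrm{Orb}(\mathcal{F})=\{\mathcal{F}\alpha^j:j\ge0\}$ where $\mathcal{F}\alpha^j=(\mathcal{F}_1\alpha^j,\dots,\mathcal{F}_r\alpha^j)$; the minimum distance of a code is the minimum $d_f$ between distinct codewords. A flag code of type $(t_1,\dots,t_r)$ is an optimum distance flag code if its minimum distance equals $2(\sum_{t_i\le\lfloor n/2\rfloor}t_i+\sum_{t_i>\lfloor n/2\rfloor}(n-t_i))$. The Galois flag of type $(t_1,\dots,t_r)$ (with $t_i\mid t_{i+1}$, $t_i\mid n$) is $(\mathbb{F}_{q^{t_1}},\dots,\mathbb{F}_{q^{t_r}})$. A generalized Galois flag is a flag having at least one subspace that is a subfield of $\mathbb{F}_{q^n}$ and at least one that is not; a generalized Galois flag code is its orbit. *)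

From HB Require Import structures.
From mathcomp Require Import all_boot all_order all_algebra all_field.
Set Implicit Arguments. Unset Strict Implicit. Unset Printing Implicit Defensive.
Import GRing.Theory.
Local Open Scope ring_scope.

(* Setting: F = F_q (a finite field), L : fieldExtType F plays F_{q^n},
   subspaces are F-subspaces {vspace L}, flags are seq {vspace L}. *)

Section FlagDefs.
Variables (F : finFieldType) (L : fieldExtType F).

Definition dS (U V : {vspace L}) : nat := (\dim (U + V) - \dim (U :&: V))%N.

Definition df (G G' : seq {vspace L}) : nat :=
  \sum_(p <- zip G G') dS p.1 p.2.

Definition flag_type (G : seq {vspace L}) : seq nat := [seq \dim U | U <- G].

Definition vmul (U : {vspace L}) (a : L) : {vspace L} := prodv U <[a]>%VS.
Definition flag_mul (G : seq {vspace L}) (a : L) : seq {vspace L} :=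
  [seq vmul U a | U <- G].

Definition in_orb (a : L) (G H : seq {vspace L}) : Prop :=
  exists j : nat, H = flag_mul G (a ^+ j).

Definition min_dist (C : seq {vspace L} -> Prop) (d : nat) : Prop :=
  (exists G H, [/\ C G, C H, G <> H & df G H = d]) /\
  (forall G H, C G -> C H -> G <> H -> (d <= df G H)%N).

Definition code_size (C : seq {vspace L} -> Prop) (N : nat) : Prop :=
  exists s : seq (seq {vspace L}),
    [/\ uniq s, (forall G, G \in s <-> C G) & size s = N].

Definition od_bound (n : nat) (t : seq nat) : nat :=
  2 * \sum_(ti <- t) (if (ti <= n./2)%N then ti else n - ti)%N.

Definition optimum_distance (n : nat) (G : seq {vspace L})
    (C : seq {vspace L} -> Prop) : Prop :=
  min_dist C (od_bound n (flag_type G)).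

Definition is_subfield (U : {vspace L}) : Prop :=
  exists E : {subfield L}, U = (E : {vspace L}).

Definition gen_galois_flag (G : seq {vspace L}) : Prop :=
  (exists2 U, U \in G & is_subfield U) /\ (exists2 U, U \in G & ~ is_subfield U).

Definition primitive_elt (a : L) : Prop :=
  let Q := (#|F| ^ \dim {:L})%N in
  a ^+ (Q - 1) = 1 /\ forall k : nat, (0 < k < Q - 1)%N -> a ^+ k != 1.

Definition flag_sub (K : {subfield L}) (a : L) (l si : nat) : {vspace L} :=
  let gens : seq L := [seq a ^+ (l * j)%N | j <- iota 0 si] in
  prodv (K : {vspace L}) (span gens).

Definition the_flag (K : {subfield L}) (a : L) (l : nat) (ss : seq nat)
  : seq {vspace L} := [seq flag_sub K a l si | si <- ss].

End FlagDefs.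

From HB Require Import structures.
From mathcomp Require Import all_boot all_order all_algebra all_field.
From mathcomp Require Import zify.
Set Implicit Arguments. Unset Strict Implicit. Unset Printing Implicit Defensive.
Import GRing.Theory.

(* Write [b = alpha ^+ l], [d] for the degree of [b] over [K] (so [Ldeg = d]) and
   [W k = K + K b + ... + K b^(k-1)], so that the flag is [(W s_1, ..., W s_r)] and the orbit
   consists of its translates by powers of [alpha].  For [k <= d] we have [dim W k = k m],
   [W d = K(b)] is fixed by [b], and [W k + W k b = W (k+1)].  For [0 < k < d], an element [g]
   with [W k g <= W k] lies in [K], by comparing degrees of polynomials in [b] of size [< d].
   Hence two distinct translates differ in every component [W s_i] with [s_i < d], each at
   distance at least [2m] since these are distinct [K]-spaces of equal dimension, whereas the
   flag and its translate by [b] are at distance exactly [2m] per such component.  So the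
   minimum distance is [2m #{i | s_i < d}], which gives (1); for (2) it is compared with the
   optimum bound [2m sum_i min(s_i, s - s_i) >= 2m r].  Finally [alpha^t] fixes the flag iff
   [alpha^t \in K], i.e. iff [(q^n - 1)/(q^m - 1)] divides [t], which is the orbit size. *)

Lemma sorted_ltn_mem_bounds (ss : seq nat) x :
  sorted ltn ss -> x \in ss -> nth 0 ss 0 <= x <= last 0 ss.
Proof.
rewrite ltn_sorted_uniq_leq => /andP[_ ss_le] ss_x.
have lt_x : index x ss < size ss by rewrite index_mem.
rewrite -(nth_index 0 ss_x) -nth_last !(sorted_leq_nth leq_trans leqnn) //.
all: rewrite ?inE /=; lia.
Qed.

Lemma sorted_ltn_head_last (ss : seq nat) :
  sorted ltn ss -> 1 < size ss -> nth 0 ss 0 < last 0 ss.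
Proof.
move=> ss_lt size_ss; rewrite -nth_last (sorted_ltn_nth ltn_trans) //.
- by rewrite inE ltnW.
- by rewrite inE prednK ?leqnn // ltnW.
- by rewrite -ltnS prednK // ltnW.
Qed.

Lemma count_ltn_eq1 d (ss : seq nat) : sorted ltn ss -> 1 < size ss ->
  last 0 ss <= d -> (count [pred k | k < d] ss == 1) = (ss == [:: nth 0 ss 0; d]).
Proof.
case: ss => [|x1 [|x2 r]] // ss_lt _ le_last_d.
have /(sorted_ltn_mem_bounds ss_lt)/andP[_ le_x2] : x2 \in x1 :: x2 :: r.
  by rewrite !inE eqxx orbT.
have [lt_12 ss2] : x1 < x2 /\ sorted ltn (x2 :: r) by apply/andP.
case: r => [|y r] in ss_lt ss2 le_x2 le_last_d *.
  by rewrite /= !eqseq_cons eqxx /= andbT; apply/eqP/eqP; rewrite /= in le_x2 le_last_d; lia.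
have /(sorted_ltn_mem_bounds ss_lt)/andP[_ le_y] : y \in [:: x1, x2, y & r].
  by rewrite !inE eqxx !orbT.
have /andP[lt_2y _] := ss2; rewrite /= in le_x2 le_last_d le_y.
have [lt_1d lt_2d] : x1 < d /\ x2 < d by lia.
by rewrite /= !eqseq_cons !andbF lt_1d lt_2d !add1n.
Qed.

Lemma sum_if_count (T : Type) (P : pred T) (r : seq T) (a : nat) :
  \sum_(x <- r) (if P x then a else 0) = a * count P r.
Proof. by rewrite -big_mkcond big_const_seq iter_addn_0 mulnC. Qed.

Lemma count_sum (T : Type) (P : pred T) (r : seq T) : count P r = \sum_(x <- r) P x.
Proof. by elim: r => [|x r IHr]; rewrite ?big_nil // big_cons -IHr. Qed.

Lemma eq_sum_leq (T : eqType) (r : seq T) (F G : T -> nat) :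
  {in r, forall x, F x <= G x} ->
  (\sum_(x <- r) G x == \sum_(x <- r) F x) = all (fun x => G x == F x) r.
Proof.
elim: r => [|x r IHr] le_FG; first by rewrite !big_nil.
have le_x := le_FG x (mem_head x r).
have le_r : {in r, forall y, F y <= G y} by move=> y r_y; rewrite le_FG // inE r_y orbT.
have : \sum_(y <- r) F y <= \sum_(y <- r) G y by rewrite !big_seq; apply: leq_sum.
rewrite !big_cons /= -IHr //; move: le_x; clear.
by move=> le_x le_sum; apply/eqP/andP => [e | [/eqP e1 /eqP e2]]; [split; apply/eqP | ]; lia.
Qed.

Lemma sum_minn_eq_count d s (ss : seq nat) :
  sorted ltn ss -> 1 < size ss -> 0 < nth 0 ss 0 -> last 0 ss < s ->
  last 0 ss <= d -> d <= s ->
  (\sum_(x <- ss) minn x (s - x) == count [pred k | k < d] ss) =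
  (d == s) && (ss == [:: 1; s - 1]).
Proof.
(* Termwise [nat_of_bool (x < d) <= 1 <= minn x (s - x)], so equality forces [x < d]
   and [x \in {1, s - 1}]. *)
move=> ss_lt size_ss head_gt0 lt_last_s le_last_d le_ds.
have bounds := sorted_ltn_mem_bounds ss_lt.
rewrite count_sum eq_sum_leq => [|x /bounds /=]; last by lia.
case: ss => [|x1 [|x2 r]] // in ss_lt size_ss head_gt0 lt_last_s le_last_d bounds *.
rewrite /= in head_gt0; clear size_ss.
have /bounds/andP[_ le_x2] : x2 \in [:: x1, x2 & r] by rewrite !inE eqxx orbT.
have [lt_12 ss2] : x1 < x2 /\ sorted ltn (x2 :: r) by apply/andP.
apply/idP/andP => [/and3P[/eqP /= min1 /eqP /= min2 _] | [/eqP ds /eqP ss_eq]]; last first.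
  by move: ss_eq ss_lt => [-> -> ->] /= /andP[lt_1s _]; apply/and3P; split=> //; apply/eqP; lia.
case: r => [|y r] /= in ss_lt ss2 le_x2 lt_last_s le_last_d bounds *.
  have [-> ->] : x1 = 1 /\ x2 = s - 1 by lia.
  by split=> //; apply/eqP; lia.
have /bounds/andP[_ le_y] : y \in [:: x1, x2, y & r] by rewrite !inE eqxx !orbT.
by have /andP[lt_2y _] := ss2; exfalso; rewrite /= in le_y; lia.
Qed.

Lemma od_bound_scaled m s (ss : seq nat) :
  {in ss, forall x, x <= s} ->
  od_bound (s * m) [seq m * x | x <- ss] = 2 * m * \sum_(x <- ss) minn x (s - x).
Proof.
move=> le_ss_s; rewrite /od_bound big_map -mulnA; congr (2 * _).
rewrite big_distrr /= !big_seq; apply: eq_bigr => x /le_ss_s le_xs.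
have le_mx : m * x <= s * m by rewrite mulnC leq_mul2r le_xs orbT.
rewrite geq_half_double minnMr mulnBr [s * m]mulnC.
by case: leqP; lia.
Qed.

Local Open Scope ring_scope.

Section FlagOperations.
Variables (F : finFieldType) (L : fieldExtType F).
Implicit Types (U : {vspace L}) (G : seq {vspace L}).

Lemma dSvv U : dS U U = 0%N.
Proof. by rewrite /dS addvv capvv subnn. Qed.

Lemma df_map (T : Type) (f g : T -> {vspace L}) (r : seq T) :
  df (map f r) (map g r) = (\sum_(x <- r) dS (f x) (g x))%N.
Proof. by elim: r => [|x r IHr]; rewrite /df ?big_nil //= !big_cons -IHr. Qed.

Lemma dfvv G : df G G = 0%N.
Proof. by rewrite -(map_id G) df_map big1 // => U _; apply: dSvv. Qed.

Lemma vmul1 U : vmul U 1 = U.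
Proof. by rewrite /vmul -/(1%VS) prodv1. Qed.

Lemma vmulA U a c : vmul (vmul U a) c = vmul U (a * c).
Proof. by rewrite /vmul -prodvA prodv_line. Qed.

Lemma dim_vmul U a : a != 0 -> \dim (vmul U a) = \dim U.
Proof. exact: dim_cosetv. Qed.

Lemma min_dist_iff (C : seq {vspace L} -> Prop) d1 d2 :
  min_dist C d1 -> min_dist C d2 <-> d2 = d1.
Proof.
move=> [[G1 [H1 [C1 C1' ne1 <-]]] min1]; split=> [[[G2 [H2 [C2 C2' ne2 <-]]] min2] | ->].
  by apply/eqP; rewrite eqn_leq min1 ?min2.
by split; [exists G1, H1 | ].
Qed.

End FlagOperations.

Section SubfieldStableSpaces.
Variables (F : finFieldType) (L : fieldExtType F) (K : {subfield L}).
Implicit Types (U V : {vspace L}).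

Lemma memv_mul_stable U c u : (K * U <= U)%VS -> c \in K -> u \in U -> c * u \in U.
Proof. by move=> KU Kc Uu; apply: (subvP KU); apply: memv_mul. Qed.

Lemma vmul_stable U a : (K * U <= U)%VS -> (K * vmul U a <= vmul U a)%VS.
Proof. by move=> KU; rewrite /vmul prodvA prodvSl. Qed.

Lemma vmul_subfield U c : (K * U <= U)%VS -> c \in K -> c != 0 -> vmul U c = U.
Proof.
move=> KU Kc nz_c; apply/eqP; rewrite eqEdim dim_vmul // leqnn andbT.
by apply/subvP=> _ /memv_cosetP[u Uu ->]; rewrite mulrC memv_mul_stable.
Qed.

Lemma dS_stable_ge U V : (K * U <= U)%VS -> (K * V <= V)%VS ->
  \dim U = \dim V -> U <> V -> (2 * \dim K <= dS U V)%N.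
Proof.
move=> KU KV dimUV neUV.
have /subvPn[u Uu Vu'] : ~~ (U <= V)%VS.
  by apply/negP => sUV; apply: neUV; apply/eqP; rewrite eqEdim sUV dimUV leqnn.
have nz_u : u != 0 by apply: contraNneq Vu' => ->; rewrite mem0v.
have capKu : ((U :&: V) :&: K * <[u]> = 0)%VS.
  apply/eqP; rewrite -subv0; apply/subvP=> z /memv_capP[/memv_capP[_ Vz]].
  case/memv_cosetP=> c Kc Dz; rewrite memv0 Dz; move: Vz; rewrite Dz => Vcu.
  apply: contraNT Vu'; rewrite mulf_eq0 negb_or => /andP[nz_c _].
  by rewrite -[u](mulKf nz_c) memv_mul_stable ?rpredV.
have /dimvS : (U :&: V + K * <[u]> <= U)%VS.
  rewrite subv_add capvSl /=; apply: subv_trans KU.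
  by apply: prodvSr; rewrite -memvE.
rewrite dimv_disjoint_sum // dim_cosetv // /dS => le_dim.
have := dimv_sum_cap U V; rewrite -dimUV.
move: le_dim; set a := \dim U; set b := \dim (U + V); set c := \dim (U :&: V).
by set k := \dim K; clearbody a b c k; clear; lia.
Qed.

End SubfieldStableSpaces.

Section PowerSpan.
Variables (F : finFieldType) (L : fieldExtType F) (K : {subfield L}) (b : L).
Local Notation d := (adjoin_degree K b).

Definition powspan (k : nat) : {vspace L} :=
  prodv K (span [seq b ^+ j | j <- iota 0 k]).

Lemma powspan1 : powspan 1 = K.
Proof. by rewrite /powspan /= span_seq1 expr0 -/(1%VS) prodv1. Qed.

Lemma powspanS k : powspan k.+1 = (powspan k + K * <[b ^+ k]>)%VS.
Proof. by rewrite /powspan -addn1 iotaD map_cat span_cat prodvDr /= span_seq1. Qed.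

Lemma powspan_stable k : (K * powspan k <= powspan k)%VS.
Proof. by rewrite /powspan prodvA prodv_id. Qed.

Lemma mem_powspan_pow i k : (i < k)%N -> b ^+ i \in powspan k.
Proof.
move=> lt_ik; rewrite -[b ^+ i]mul1r memv_mul ?mem1v // memv_span //.
by rewrite map_f // mem_iota.
Qed.

Lemma mem_powspan_horner p k :
  p \is a polyOver K -> (size p <= k)%N -> p.[b] \in powspan k.
Proof.
move=> Kp le_pk; rewrite (horner_coef_wide _ le_pk) rpred_sum // => i _.
by rewrite (memv_mul_stable (powspan_stable k)) ?mem_powspan_pow ?(polyOverP Kp).
Qed.

Lemma powspan_horner k v : v \in powspan k ->
  exists2 p, p \is a polyOver K & (size p <= k)%N /\ v = p.[b].
Proof.
elim: k v => [|k IHk] v.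
  rewrite /powspan /= span_nil prodv0 memv0 => /eqP->.
  by exists 0; rewrite ?polyOver0 ?size_poly0 ?horner0.
rewrite powspanS => /memv_addP[u /IHk[p Kp [le_pk ->]] [_ /memv_cosetP[c Kc ->] ->]].
exists (p + c *: 'X^k); first by rewrite rpredD ?polyOverZ ?rpredX ?polyOverX.
split; last by rewrite hornerD hornerZ hornerXn.
rewrite (leq_trans (size_polyD _ _)) // geq_max (leq_trans le_pk) //=.
by rewrite (leq_trans (size_scale_leq _ _)) // size_polyXn.
Qed.


Lemma pow_notin_powspan k : (k < d)%N -> b ^+ k \notin powspan k.
Proof.
move=> lt_kd; apply/negP => /powspan_horner[p Kp [le_pk Dp]].
have Kq : 'X^k - p \is a polyOver K by rewrite rpredB ?rpredX ?polyOverX.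
have size_q : size ('X^k - p) = k.+1.
  by rewrite size_polyDl size_polyXn // size_polyN ltnS.
have := @root_small_adjoin_poly _ _ K b _ Kq; rewrite size_q => /(_ lt_kd).
rewrite /root !hornerE -Dp subrr eqxx => /esym/eqP q0.
by move: size_q; rewrite q0 size_poly0.
Qed.

Lemma dim_powspan k : (k <= d)%N -> \dim (powspan k) = (k * \dim K)%N.
Proof.
elim: k => [|k IHk] lt_kd; first by rewrite /powspan /= span_nil prodv0 dimv0.
have nz_bk : b ^+ k != 0.
  by apply: contraNneq (pow_notin_powspan lt_kd) => ->; rewrite mem0v.
rewrite powspanS dimv_disjoint_sum ?dim_cosetv ?IHk 1?ltnW ?mulSn 1?addnC //.
apply/eqP; rewrite -subv0; apply/subvP=> z /memv_capP[Wz /memv_cosetP[c Kc Dz]].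
rewrite memv0 Dz; apply: contraNT (pow_notin_powspan lt_kd).
rewrite mulf_eq0 negb_or => /andP[nz_c _]; rewrite -[b ^+ k](mulKf nz_c).
by rewrite (memv_mul_stable (powspan_stable k)) ?rpredV // -Dz.
Qed.

Lemma powspan_adjoin : powspan d = <<K; b>>%VS.
Proof.
apply/eqP; rewrite eqEdim dim_powspan // dim_Fadjoin leqnn andbT.
by apply/subvP=> _ /powspan_horner[p Kp [_ ->]]; apply: mempx_Fadjoin.
Qed.

(* If [g = p.[b]] with [0 < deg p = e], then [b ^+ (k - e) * g] is a polynomial in [b]
   of degree [k < d]. *)
Lemma powspan_stab_mem k g : (0 < k < d)%N ->
  (forall v, v \in powspan k -> v * g \in powspan k) -> g \in K.
Proof.
case/andP=> k_gt0 lt_kd stab_g.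
have [p Kp [le_pk Dg]] := powspan_horner (stab_g _ (mem_powspan_pow k_gt0)).
rewrite expr0 mul1r in Dg; have [/size1_polyC Dp | lt1p] := leqP (size p) 1.
  by rewrite Dg Dp hornerC (polyOverP Kp).
have [e De] : exists e, size p = e.+1 by exists (size p).-1; rewrite prednK // ltnW.
have nz_p : p != 0 by rewrite -size_poly_gt0 De.
have lt_ek : (k - e < k)%N by rewrite ltn_subrL k_gt0 andbT -ltnS -De.
have [h Kh [le_hk Dh]] := powspan_horner (stab_g _ (mem_powspan_pow lt_ek)).
have Kq : p * 'X^(k - e) - h \is a polyOver K.
  by rewrite rpredB ?rpredM ?rpredX ?polyOverX.
have size_q : size (p * 'X^(k - e) - h) = k.+1.
  have le_ek : (e <= k)%N by rewrite -ltnS -De (leq_trans le_pk).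
  by rewrite size_polyDl size_mulXn // De addnS subnK // size_polyN ltnS.
have := @root_small_adjoin_poly _ _ K b _ Kq; rewrite size_q => /(_ lt_kd).
rewrite /root !hornerE -Dg -Dh mulrC subrr eqxx => /esym/eqP q0.
by move: size_q; rewrite q0 size_poly0.
Qed.

Lemma powspan_not_subfield k : (1 < k < d)%N -> ~ is_subfield (powspan k).
Proof.
case/andP=> lt1k lt_kd [E DE]; have b_k : b ^+ 1 \in powspan k by apply: mem_powspan_pow.
suff : b \in K by rewrite -adjoin_deg_eq1 => /eqP d1; rewrite d1 ltnNge ltnW in lt_kd.
apply: (@powspan_stab_mem k); first by rewrite (ltn_trans _ lt1k).
by move=> v; rewrite DE in b_k * => Ev; rewrite rpredM.
Qed.

Lemma powspan_mul k : (0 < k)%N -> (powspan k + vmul (powspan k) b)%VS = powspan k.+1.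
Proof.
move=> k_gt0; apply/eqP; rewrite eqEsubv powspanS !subv_add !addvSl /=.
apply/andP; split.
  apply/subvP=> _ /memv_cosetP[_ /powspan_horner[p Kp [le_pk ->]] ->].
  rewrite -hornerMX -powspanS mem_powspan_horner ?rpredM ?polyOverX //.
  by rewrite (leq_trans (size_polyMleq _ _)) // size_polyX addn2.
apply: subv_trans (addvSr _ _); apply/subvP=> _ /memv_cosetP[c Kc ->].
rewrite -(prednK k_gt0) exprSr mulrA memv_mul ?memv_line //.
by rewrite (memv_mul_stable (powspan_stable _)) ?mem_powspan_pow ?prednK.
Qed.

End PowerSpan.


Section FlagOrbit.
Variables (F : finFieldType) (L : fieldExtType F) (K : {subfield L}) (alpha : L) (l : nat).
Hypothesis alpha_neq0 : alpha != 0.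
Local Notation b := (alpha ^+ l).
Local Notation d := (adjoin_degree K (alpha ^+ l)).
Local Notation W := (powspan K (alpha ^+ l)).

Lemma the_flagE ss : the_flag K alpha l ss = map W ss.
Proof.
apply: eq_map => k; rewrite /flag_sub /powspan.
by congr (prodv _ (span _)); apply: eq_map => j; rewrite exprM.
Qed.

Lemma flag_mul_the_flag ss g :
  flag_mul (the_flag K alpha l ss) g = [seq vmul (W k) g | k <- ss].
Proof. by rewrite the_flagE /flag_mul -map_comp. Qed.

Lemma flag_type_the_flag ss : {in ss, forall k, k <= d}%N ->
  flag_type (the_flag K alpha l ss) = [seq \dim K * k | k <- ss]%N.
Proof.
move=> le_ss_d; rewrite /flag_type the_flagE -map_comp.
by apply/eq_in_map => k /le_ss_d le_kd /=; rewrite dim_powspan // mulnC.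
Qed.

Lemma dS_powspan_mul k : (0 < k < d)%N -> dS (W k) (vmul (W k) b) = (2 * \dim K)%N.
Proof.
case/andP=> k_gt0 lt_kd; have nz_b : b != 0 by rewrite expf_neq0.
have := dimv_sum_cap (W k) (vmul (W k) b).
rewrite /dS powspan_mul // dim_vmul // !dim_powspan // 1?ltnW // mulSn.
move: (\dim (_ :&: _)); set a := (k * _)%N; set m := \dim K.
by clearbody a m => c; lia.
Qed.

Lemma vmul_powspan_adjoin : vmul (W d) b = W d.
Proof.
by rewrite powspan_adjoin (@vmul_subfield _ _ <<K; b>>%AS) ?prodv_id ?memv_adjoin ?expf_neq0.
Qed.

Lemma flag_mul_subfield ss c g : c \in K -> c != 0 ->
  flag_mul (the_flag K alpha l ss) (c * g) = flag_mul (the_flag K alpha l ss) g.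
Proof.
move=> Kc nz_c; rewrite !flag_mul_the_flag; apply: eq_map => k.
by rewrite -vmulA (vmul_subfield (powspan_stable _ _ _)).
Qed.

Lemma vmul_powspan_eq k g h : (0 < k < d)%N -> g != 0 ->
  vmul (W k) g = vmul (W k) h -> h / g \in K.
Proof.
move=> k_range nz_g Wgh; apply: (powspan_stab_mem k_range) => v Wv.
have : v * h \in vmul (W k) h by rewrite memv_mul ?memv_line.
by rewrite -Wgh => /memv_cosetP[w Ww Dvh]; rewrite mulrA Dvh mulfK.
Qed.

Lemma flag_mul_eq ss k g h : (0 < k < d)%N -> g != 0 -> h != 0 ->
  vmul (W k) g = vmul (W k) h ->
  flag_mul (the_flag K alpha l ss) g = flag_mul (the_flag K alpha l ss) h.
Proof.
move=> k_range nz_g nz_h /(vmul_powspan_eq k_range nz_g) Khg.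
by rewrite -[h](divfK nz_g) flag_mul_subfield // mulf_neq0 ?invr_eq0.
Qed.

Lemma flag_mul1 ss : flag_mul (the_flag K alpha l ss) 1 = the_flag K alpha l ss.
Proof. by rewrite /flag_mul -[RHS]map_id; apply: eq_map => U; rewrite vmul1. Qed.

Variable ss : seq nat.
Hypothesis ss_range : {in ss, forall k, 0 < k <= d}%N.
Local Notation Fl := (the_flag K alpha l ss).
Local Notation c := (count [pred k | k < d] ss)%N.

Lemma df_the_flag_mul : df Fl (flag_mul Fl b) = (2 * \dim K * c)%N.
Proof.
rewrite flag_mul_the_flag the_flagE df_map -sum_if_count !big_seq.
apply: eq_bigr => k /ss_range/andP[k_gt0 le_kd] /=; case: ltnP => [lt_kd | ge_kd].
  by rewrite dS_powspan_mul ?k_gt0.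
have -> : k = d by apply/eqP; rewrite eqn_leq le_kd.
by rewrite vmul_powspan_adjoin dSvv.
Qed.

Lemma df_orbit_ge i j : flag_mul Fl (alpha ^+ i) <> flag_mul Fl (alpha ^+ j) ->
  (2 * \dim K * c <= df (flag_mul Fl (alpha ^+ i)) (flag_mul Fl (alpha ^+ j)))%N.
Proof.
move=> neq_ij; rewrite !flag_mul_the_flag df_map -sum_if_count !big_seq.
apply: leq_sum => k /ss_range/andP[k_gt0 _] /=; case: ifP => // lt_kd.
have W_stable := powspan_stable K b k.
apply: dS_stable_ge; rewrite ?(vmul_stable _ W_stable) ?dim_vmul ?expf_neq0 //.
by apply: contra_not neq_ij; apply: flag_mul_eq; rewrite ?k_gt0 ?expf_neq0.
Qed.

Lemma min_dist_orbit : has [pred k | k < d]%N ss ->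
  min_dist (in_orb alpha Fl) (2 * \dim K * c).
Proof.
move=> has_lt; split; last by move=> _ _ [i ->] [j ->]; apply: df_orbit_ge.
exists Fl, (flag_mul Fl b); split; [by exists 0%N; rewrite flag_mul1 | by exists l | |].
  move=> eq_Fl; have := df_the_flag_mul; rewrite -eq_Fl dfvv.
  by move/esym/eqP; rewrite !muln_eq0 !eqn0Ngt adim_gt0 -has_count has_lt.
exact: df_the_flag_mul.
Qed.

End FlagOrbit.

Section PrimitiveElement.
Variables (F : finFieldType) (L : fieldExtType F) (alpha : L).
Hypothesis alpha_prim : primitive_elt alpha.
Local Notation q := #|F|.
Local Notation Q := (q ^ \dim {:L})%N.

Lemma card_subfield_gt1 (K : {subfield L}) : (1 < q ^ \dim K)%N.
Proof. by rewrite -(expn0 q) ltn_exp2l ?adim_gt0 ?finNzRing_gt1. Qed.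

Lemma primitive_elt_root : (Q - 1).-primitive_root alpha.
Proof.
have [alphaQ alpha_min] := alpha_prim.
have Q_gt1 : (1 < Q)%N by apply: (card_subfield_gt1 {:L}%AS).
apply/andP; split; first by rewrite subn_gt0.
apply/forallP=> i; rewrite unity_rootE; have [-> | ne_iQ] := eqVneq i.+1 (Q - 1)%N.
  by rewrite alphaQ eqxx.
by rewrite (negPf (alpha_min i.+1 _)) //= ltn_neqAle ne_iQ ltn_ord.
Qed.

Lemma primitive_elt_neq0 : alpha != 0.
Proof.
apply/eqP => alpha0; have := prim_expr_order primitive_elt_root.
rewrite alpha0 expr0n gtn_eqF ?(prim_order_gt0 primitive_elt_root) //=.
by move/esym/eqP; rewrite oner_eq0.
Qed.

Lemma card_subfield_pred_dvd (K : {subfield L}) : (q ^ \dim K - 1 %| Q - 1)%N.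
Proof.
have /dvdnP[e ->] := field_dimS (subvf K).
by rewrite mulnC expnM !subn1 dvdn_pred_predX.
Qed.

Lemma expr_mem_subfield (K : {subfield L}) t :
  (alpha ^+ t \in K) = ((Q - 1) %/ (q ^ \dim K - 1) %| t)%N.
Proof.
have M_gt1 := card_subfield_gt1 K.
have dvd_MQ := card_subfield_pred_dvd K.
have nz_at : alpha ^+ t != 0 by rewrite expf_neq0 // primitive_elt_neq0.
rewrite Fermat's_little_theorem -{1}(subnK (ltnW M_gt1)) exprD expr1.
rewrite -{3}[alpha ^+ t]mul1r (inj_eq (mulIf nz_at)) -exprM.
by rewrite -(prim_order_dvd primitive_elt_root) -{1}(divnK dvd_MQ) dvdn_pmul2r ?subn_gt0.
Qed.

Variables (K : {subfield L}) (l : nat) (ss : seq nat).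
Local Notation d := (adjoin_degree K (alpha ^+ l)).
Local Notation N := ((Q - 1) %/ (q ^ \dim K - 1))%N.
Local Notation Fl := (the_flag K alpha l ss).
Hypothesis ss_proper : exists2 k, k \in ss & (0 < k < d)%N.

Lemma flag_mul_expr_eq i j :
  (flag_mul Fl (alpha ^+ i) == flag_mul Fl (alpha ^+ j)) = (i == j %[mod N]).
Proof.
wlog le_ij : i j / (i <= j)%N.
  by move=> IH; case: (leqP i j) => [|/ltnW] /IH //; rewrite eq_sym => ->.
have nz_alpha := primitive_elt_neq0.
have -> : alpha ^+ j = alpha ^+ (j - i) * alpha ^+ i by rewrite -exprD subnK.
rewrite [RHS]eq_sym eqn_mod_dvd // -expr_mem_subfield.
apply/eqP/idP => [| K_ji]; last by rewrite flag_mul_subfield ?expf_neq0.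
have [k ss_k k_range] := ss_proper.
have nz_ai : alpha ^+ i != 0 by rewrite expf_neq0.
rewrite !flag_mul_the_flag => /eq_in_map/(_ k ss_k).
by move/(vmul_powspan_eq k_range nz_ai); rewrite mulfK.
Qed.

Lemma code_size_orbit : code_size (in_orb alpha Fl) N.
Proof.
have N_gt0 : (0 < N)%N.
  rewrite divn_gt0 ?subn_gt0 ?card_subfield_gt1 // dvdn_leq ?card_subfield_pred_dvd //.
  by rewrite subn_gt0 (card_subfield_gt1 {:L}%AS).
exists [seq flag_mul Fl (alpha ^+ j) | j <- iota 0 N]; split.
- rewrite map_inj_in_uniq ?iota_uniq // => i j; rewrite !mem_iota => lt_iN lt_jN.
  by move/eqP; rewrite flag_mul_expr_eq !modn_small // => /eqP.
- move=> G; split => [/mapP[j _ ->] | [j ->]]; first by exists j.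
  apply/mapP; exists (j %% N)%N; first by rewrite mem_iota ltn_mod.
  by apply/eqP; rewrite flag_mul_expr_eq modn_mod.
- by rewrite size_map size_iota.
Qed.

End PrimitiveElement.


Section TheFlagCode.
Variables (F : finFieldType) (L : fieldExtType F) (K : {subfield L}) (alpha : L).
Variables (l : nat) (ss : seq nat).
Local Notation m := (\dim K).
Local Notation d := (adjoin_degree K (alpha ^+ l)).
Local Notation Fl := (the_flag K alpha l ss).
Local Notation Orb := (in_orb alpha Fl).
Hypotheses (alpha_neq0 : alpha != 0) (ss_lt : sorted ltn ss) (size_ss : (1 < size ss)%N).
Hypotheses (head_gt0 : (0 < nth 0 ss 0)%N) (last_le_d : (last 0 ss <= d)%N).

Let ss_range : {in ss, forall k, 0 < k <= d}%N.
Proof.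
move=> k /(sorted_ltn_mem_bounds ss_lt)/andP[le_head le_last].
by rewrite (leq_trans head_gt0) // (leq_trans le_last).
Qed.

Lemma flag_type_the_flagE : flag_type Fl = [seq m * k | k <- ss]%N.
Proof. by apply: flag_type_the_flag => k /ss_range/andP[]. Qed.

Lemma flag_type_the_flag_eq t : flag_type Fl = [seq m * k | k <- t]%N <-> ss = t.
Proof.
rewrite flag_type_the_flagE; split=> [/inj_map | -> //]; apply.
by move=> i j /eqP; rewrite eqn_pmul2l ?adim_gt0 // => /eqP.
Qed.

Lemma the_flag_proper_component : exists2 k, k \in ss & (0 < k < d)%N.
Proof.
exists (nth 0 ss 0); first by rewrite mem_nth // ltnW.
by rewrite head_gt0 (leq_trans (sorted_ltn_head_last ss_lt size_ss)).
Qed.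

Lemma min_dist_the_flag : min_dist Orb (2 * m * count [pred k | k < d] ss)%N.
Proof.
apply: min_dist_orbit => //; apply/hasP.
by have [k ss_k /andP[_ lt_kd]] := the_flag_proper_component; exists k.
Qed.

Lemma min_dist_the_flag_2m : min_dist Orb (2 * m) <-> ss = [:: nth 0 ss 0; d].
Proof.
have m2_gt0 : (0 < 2 * m)%N by rewrite muln_gt0 adim_gt0.
rewrite (min_dist_iff _ min_dist_the_flag); split=> [Dm2 | ss_eq].
  by apply/eqP; rewrite -count_ltn_eq1 // -(eqn_pmul2l m2_gt0) -Dm2 muln1.
by move/eqP: ss_eq; rewrite -count_ltn_eq1 // => /eqP->; rewrite muln1.
Qed.

Lemma the_flag_subfields : ss = [:: 1; d]%N ->
  exists E : {subfield L}, \dim E = (m * d)%N /\ Fl = [:: (K : {vspace L}); (E : {vspace L})].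
Proof.
move=> ss_eq; exists <<K; alpha ^+ l>>%AS; rewrite dim_Fadjoin mulnC; split=> //.
by rewrite the_flagE ss_eq /= powspan1 powspan_adjoin.
Qed.

Variable s : nat.
Hypotheses (last_lt_s : (last 0 ss < s)%N) (dim_L : \dim {:L} = (s * m)%N).

Lemma adjoin_degree_le_dim : (d <= s)%N.
Proof. by rewrite -(leq_pmul2r (adim_gt0 K)) -dim_L -dim_Fadjoin dimvS ?subvf. Qed.

Lemma optimum_distance_the_flag :
  optimum_distance (\dim {:L}) Fl Orb <-> d = s /\ ss = [:: 1; s - 1]%N.
Proof.
have m2_gt0 : (0 < 2 * m)%N by rewrite muln_gt0 adim_gt0.
have ss_le_s : {in ss, forall k, k <= s}%N.
  move=> k /(sorted_ltn_mem_bounds ss_lt)/andP[_ le_last].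
  exact: leq_trans le_last (ltnW last_lt_s).
rewrite /optimum_distance flag_type_the_flagE dim_L od_bound_scaled //.
rewrite (min_dist_iff _ min_dist_the_flag).
have := sum_minn_eq_count ss_lt size_ss head_gt0 last_lt_s last_le_d adjoin_degree_le_dim.
rewrite -(eqn_pmul2l m2_gt0) => sum_eq.
split=> [/eqP | [ds ss_eq]]; first by rewrite sum_eq => /andP[/eqP ds /eqP ss_eq].
by apply/eqP; rewrite sum_eq ds ss_eq !eqxx.
Qed.

Lemma gen_galois_the_flag : d = s -> ss = [:: 1; s - 1]%N -> gen_galois_flag Fl.
Proof.
move=> ds ss_eq; have lt_1s : (1 < s - 1)%N by move: ss_lt; rewrite ss_eq /= andbT.
rewrite the_flagE ss_eq /= powspan1; split.
  by exists (K : {vspace L}); [rewrite mem_head | exists K].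
exists (powspan K (alpha ^+ l) (s - 1)); first by rewrite !inE eqxx orbT.
have s_gt0 : (0 < s)%N := leq_trans (ltnW lt_1s) (leq_subr 1 s).
by apply: powspan_not_subfield; rewrite lt_1s ds ltn_subrL s_gt0.
Qed.

End TheFlagCode.

Theorem mainTheorem8 (F : finFieldType) (L : fieldExtType F)
  (m : nat) (K : {subfield L}) (alpha : L) (l : nat) (ss : seq nat) :
  let q := #|F| in
  let n := \dim {:L} in
  let s := (n %/ m)%N in
  let Ldeg := (size (minPoly K (alpha ^+ l))).-1 in
  let r := size ss in
  let Fl := the_flag K alpha l ss in
  let Orb := in_orb alpha Fl in
  (0 < m)%N -> (m %| n)%N -> \dim K = m ->
  primitive_elt alpha ->
  (1 <= l)%N -> (l < (q ^ n - 1) %/ (q ^ m - 1))%N ->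
  (2 <= r)%N -> sorted ltn ss -> (1 <= nth 0 ss 0)%N ->
  (last 0 ss <= Ldeg)%N -> (last 0 ss < s)%N ->
  (* (1) *)
  ((min_dist Orb (2 * m) <-> flag_type Fl = [:: m * nth 0 ss 0; m * Ldeg]%N)
   /\ (flag_type Fl = [:: m * nth 0 ss 0; m * Ldeg]%N -> nth 0 ss 0 = 1%N ->
       exists E : {subfield L},
         \dim E = (m * Ldeg)%N /\ Fl = [:: (K : {vspace L}); (E : {vspace L})]))
  /\
  (* (2) *)
  ((optimum_distance n Fl Orb <->
      Ldeg = s /\ flag_type Fl = [:: m; m * (Ldeg - 1)]%N)
   /\ (optimum_distance n Fl Orb ->
       gen_galois_flag Fl /\ code_size Orb ((q ^ n - 1) %/ (q ^ m - 1))%N)).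
Proof.
move=> q n s Ldeg r Fl Orb m_gt0 dvd_mn dimK prim _ _ size_ss ss_lt head_gt0.
rewrite /Ldeg size_minPoly /= => last_le_d last_lt_s; subst m.
have alpha_neq0 := primitive_elt_neq0 prim.
have dim_L : n = (s * \dim K)%N by rewrite divnK.
have typeE t := flag_type_the_flag_eq ss_lt head_gt0 last_le_d t.
have opt_iff := optimum_distance_the_flag alpha_neq0 ss_lt size_ss head_gt0
  last_le_d last_lt_s dim_L.
split; split.
- by rewrite min_dist_the_flag_2m //; apply: iff_sym (typeE [:: _; _]).
- move/(typeE [:: _; _])=> ss_eq head1.
  by apply: the_flag_subfields; rewrite ss_eq head1.
- rewrite -[X in [:: X; _]]muln1 opt_iff; split=> -[ds ss_eq]; split=> //.
    by apply (typeE [:: _; _]); rewrite ss_eq ds.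
  by move/(typeE [:: _; _]): ss_eq => ->; rewrite ds.
move/opt_iff=> [ds ss_eq]; split; first exact: (gen_galois_the_flag ss_lt ds ss_eq).
by apply: code_size_orbit; last exact: (the_flag_proper_component ss_lt size_ss head_gt0 last_le_d).
Qed.
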